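(* For $n\geq 1$, $$P^{(\mathsf{cros}, \mathsf{exc}, \mathsf{fix})}(\mathfrak{S}_n(321); q, tq, r)=\left(\frac{1+xt}{1+x}\right)^{n}P^{(\mathsf{cros}, \mathsf{cpk}, \mathsf{exc}, \mathsf{fix})}\left(\mathfrak{S}_n(321); q, \frac{(1+x)^{2}t}{(x+t)(1+xt)},\frac{q(x+t)}{1+xt}, \frac{(1+x)r}{1+xt}\right),$$ equivalently, $$P^{(\mathsf{cros}, \mathsf{cpk}, \mathsf{exc}, \mathsf{fix})}(\mathfrak{S}_n(321); q, x, qt, r)=\left(\frac{1+u}{1+uv}\right)^{n}P^{(\mathsf{cros}, \mathsf{exc}, \mathsf{fix})}\left(\mathfrak{S}_n(321); q, qv, \frac{(1+uv)r}{1+u}\right),$$ where $u=\frac{1+t^{2}-2xt-(1-t)\sqrt{(1+t)^{2}-4xt}}{2(1-x)t}$ and $v=\frac{(1+t)^{2}-2xt-(1+t)\sqrt{(1+t)^{2}-4xt}}{2xt}$.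
   Context: $\mathfrak{S}_n(321)$ is the set of permutations of $[n]$ avoiding the pattern $321$. $P^{(\mathsf{stat}_1,\ldots,\mathsf{stat}_m)}(\Omega;t_1,\ldots,t_m)=\sum_{\sigma\in\Omega}\prod_jt_j^{\mathsf{stat}_j\sigma}$. $\mathsf{exc}\,\sigma=\#\{i:\sigma(i)>i\}$, $\mathsf{fix}\,\sigma=\#\{i:\sigma(i)=i\}$, $\mathsf{cpk}\,\sigma=\#\{x:\sigma^{-1}(x)<x>\sigma(x)\}$, $\mathsf{cros}\,\sigma=\sum_{i}\#\{j:j<i<\sigma(j)<\sigma(i)\text{ or }\sigma(i)<\sigma(j)\le i<j\}$. *)

From mathcomp Require Import all_boot all_order all_fingroup all_algebra.
Set Implicit Arguments. Unset Strict Implicit. Unset Printing Implicit Defensive.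
Import GRing.Theory Num.Theory.

(* Permutations of [n] are modelled as 'S_n, permutations of 'I_n = {0,..,n-1};
   all statistics below are invariant under the shift i |-> i+1. *)

Definition avoids321 n (s : 'S_n) : bool :=
  [forall i : 'I_n, forall j : 'I_n, forall k : 'I_n,
     ~~ [&& i < j, j < k, s j < s i & s k < s j]].

Definition exc n (s : 'S_n) : nat := #|[set i : 'I_n | i < s i]|.
Definition fix_ n (s : 'S_n) : nat := #|[set i : 'I_n | s i == i]|.
Definition cpk n (s : 'S_n) : nat := #|[set x : 'I_n | ((s^-1)%g x < x) && (s x < x)]|.
Definition cros n (s : 'S_n) : nat :=
  \sum_(i : 'I_n) #|[set j : 'I_n | [&& j < i, i < s j & s j < s i]
                                  || [&& s i < s j, s j <= i & i < j]]|.

Local Open Scope ring_scope.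

Definition P3 (R : comRingType) n (a b c : R) : R :=
  \sum_(s : 'S_n | avoids321 s) a ^+ cros s * b ^+ exc s * c ^+ fix_ s.

Definition P4 (R : comRingType) n (a b c d : R) : R :=
  \sum_(s : 'S_n | avoids321 s)
     a ^+ cros s * b ^+ cpk s * c ^+ exc s * d ^+ fix_ s.

(* A 321-avoiding permutation s of [n] is determined by the pair (A, V) of its
   excedance positions {i | i < s i} and excedance values {x | s^-1 x < x}: its
   excedances and its non-excedances are both increasing, so s sends the i-th
   element of A to the i-th element of V and the i-th element outside A to the
   i-th element outside V.  The pairs arising this way are exactly the ballot
   pairs (|A| = |V|, and V has at most as many elements below k+1 as A has below
   k).  With h(k) = #(A ∩ [0,k)) - #(V ∩ [0,k)), the number of arcs of s passing
   over k, one gets exc = |A|, cpk = |V \ A|, cros + exc = Σ_k h(k), and the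
   fixed points are the k ∉ A with h(k) = 0.

   Cyclic double ascents (points of A ∩ V) and cyclic valleys (points outside
   A ∪ V with h > 0) can be traded for each other without changing h, so a
   ballot pair is a disjoint one together with a subset X of its cyclic valleys.
   Summing over X, P4(q, a, qb, d) becomes a sum over disjoint ballot pairs of
   q^(Σh) (ab)^|A| d^#fix (1+b)^#cval, where |A| + |V| + #cval + #fix = n.
   Hence λ^n P4(q, a, qb, d) = P4(q, a', qb', d') as soon as λ²ab = a'b',
   λd = d' and λ(1+b) = 1+b', and both identities are instances of this.  In
   the second one, D² = (1+t)² - 4xt turns u and v into (D-1+t)/(D+1-t) and
   (1+t-D)/(1+t+D), after which the three conditions are rational identities. *)

From mathcomp Require Import all_boot all_order all_fingroup all_algebra.
From mathcomp Require Import zify ring.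
Import GRing.Theory Num.Theory.
Set Implicit Arguments. Unset Strict Implicit. Unset Printing Implicit Defensive.

Lemma sum_boolP (I : finType) (P : pred I) :
  reflect (exists i, P i) (0 < \sum_i (P i : nat)).
Proof.
rewrite lt0n sum_nat_eq0; apply: (iffP forallPn) => -[i Pi]; exists i; by case: (P i) Pi.
Qed.

Lemma card_sumb (I : finType) (A : {pred I}) : #|A| = \sum_i (i \in A : nat).
Proof. by rewrite -sum1_card big_mkcond; apply: eq_bigr => i _; case: (i \in A). Qed.

Lemma sum_eq_andb (I : finType) (i : I) (P : pred I) :
  \sum_j ((j == i) && P j : nat) = P i.
Proof. by rewrite (bigD1 i) //= eqxx big1 ?addn0 // => j /negbTE ->. Qed.

Lemma sum_perm_eq_andb (T : finType) (s : {perm T}) (i : T) (P : pred T) :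
  \sum_j ((s j == i) && P j : nat) = P ((s^-1)%g i).
Proof.
by rewrite -sum_eq_andb; apply: eq_bigr => j _; rewrite (can2_eq (permK s) (permKV s)).
Qed.

Lemma sum_up_down_crossings n (s : 'S_n) (k : nat) :
  \sum_(j : 'I_n) ((j < k) && (k <= s j) : nat) =
  \sum_(j : 'I_n) ((k <= j) && (s j < k) : nat).
Proof.
have below_k : \sum_(j : 'I_n) (j < k : nat) = \sum_(j : 'I_n) (s j < k : nat).
  by rewrite (reindex_inj (@perm_inj _ s)).
apply/eqP; rewrite -(eqn_add2l (\sum_(j : 'I_n) ((j < k) && (s j < k) : nat))) -!big_split /=.
rewrite (eq_bigr (fun j : 'I_n => (j < k : nat))) => [|j _]; last by lia.
by rewrite below_k; apply/eqP/eq_bigr => j _; lia.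
Qed.

(** * Ballot pairs and excedance pairs *)

Definition count_lt n (A : {set 'I_n}) (k : nat) : nat :=
  \sum_(j : 'I_n) ((j \in A) && (j < k) : nat).

Notation pairset n := ({set 'I_n} * {set 'I_n})%type.

Definition height n (p : pairset n) (k : nat) : nat := count_lt p.1 k - count_lt p.2 k.
Definition area n (p : pairset n) : nat := \sum_(k : 'I_n) height p k.
Definition ground n (p : pairset n) : {set 'I_n} :=
  [set k | (k \notin p.1) && (height p k == 0)].
Definition ballot n (p : pairset n) : bool :=
  (#|p.1| == #|p.2|) && [forall k : 'I_n, count_lt p.2 k.+1 <= count_lt p.1 k].

Definition exc_pair n (s : 'S_n) : pairset n :=
  ([set i : 'I_n | i < s i], [set x : 'I_n | (s^-1)%g x < x]).

Lemma count_ltS n (A : {set 'I_n}) (k : 'I_n) : count_lt A k.+1 = count_lt A k + (k \in A).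
Proof.
rewrite /count_lt -(sum_eq_andb k (fun=> k \in A)) -big_split; apply: eq_bigr => j _ /=.
have [->|] := eqVneq j k; first by rewrite ltnn ltnSn /=; case: (k \in A).
rewrite andFb addn0 -val_eqE /= => ne.
by case: (j \in A) => /=; lia.
Qed.

Lemma count_lt_mono n (A : {set 'I_n}) (a b : nat) : a <= b -> count_lt A a <= count_lt A b.
Proof. by move=> ab; apply: leq_sum => j _; case: (j \in A); lia. Qed.

Lemma count_ltC n (A : {set 'I_n}) (k : nat) :
  count_lt A k + count_lt (~: A) k = count_lt [set: 'I_n] k.
Proof.
rewrite /count_lt -big_split; apply: eq_bigr => j _ /=; rewrite !inE.
by case: (j \in A); case: (j < k).
Qed.

Lemma height_exc_pair n (s : 'S_n) (k : nat) :
  height (exc_pair s) k = \sum_(j : 'I_n) ((j < k) && (k <= s j) : nat).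
Proof.
rewrite /height /count_lt /=.
have -> : \sum_(j : 'I_n) ((j \in [set x | (s^-1)%g x < x]) && (j < k) : nat) =
          \sum_(j : 'I_n) ((j < s j) && (s j < k) : nat).
  by rewrite (reindex_inj (@perm_inj _ s)); apply: eq_bigr => j _; rewrite inE permK.
rewrite [X in X - _](_ : _ = \sum_(j : 'I_n) ((j < s j) && (s j < k) : nat) +
                              \sum_(j : 'I_n) ((j < k) && (k <= s j) : nat)).
  by rewrite addKn.
by rewrite -big_split; apply: eq_bigr => j _; rewrite inE /=; lia.
Qed.

Lemma card_exc_val n (s : 'S_n) : #|(exc_pair s).2| = #|(exc_pair s).1|.
Proof.
rewrite !card_sumb (reindex_inj (@perm_inj _ s)); apply: eq_bigr => j _.
by rewrite !inE permK.
Qed.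

Lemma cpkE n (s : 'S_n) : cpk s = #|(exc_pair s).2 :\: (exc_pair s).1|.
Proof.
apply: eq_card => x; rewrite !inE -leqNgt.
have [lt_sVx|] := ltnP ((s^-1)%g x) x; rewrite ?andbT ?andbF //.
have : s x != x by apply/eqP => sx; move: lt_sVx; rewrite -{1}sx permK ltnn.
by rewrite -val_eqE /=; lia.
Qed.

Lemma ballot_exc_pair n (s : 'S_n) : ballot (exc_pair s).
Proof.
rewrite /ballot card_exc_val eqxx /=; apply/forallP => k; rewrite /count_lt.
rewrite (reindex_inj (@perm_inj _ s)) /=; apply: leq_sum => j _.
by rewrite !inE permK; lia.
Qed.

Lemma avoids321P n (s : 'S_n) (i j k : 'I_n) :
  avoids321 s -> i < j -> j < k -> s j < s i -> s k < s j -> False.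
Proof.
move=> /forallP /(_ i) /forallP /(_ j) /forallP /(_ k) no321 ij jk ji kj.
by move: no321; rewrite ij jk ji kj.
Qed.

Lemma perm_ltn_neq n (s : 'S_n) (i j : 'I_n) : i < j -> s i != s j :> nat.
Proof. by move=> ij; rewrite val_eqE (inj_eq (@perm_inj _ s)) -val_eqE /= neq_ltn ij. Qed.

Section Avoiding321.

Variables (n : nat) (s : 'S_n).
Hypothesis s321 : avoids321 s.

Lemma exc_increasing (i j : 'I_n) : i < j -> i < s i -> j < s j -> s i < s j.
Proof.
move=> ij ei ej; rewrite ltnNge; apply/negP => le.
have lt : s j < s i by have := perm_ltn_neq s ij; lia.
have : 0 < \sum_(l : 'I_n) ((l < j.+1) && (j.+1 <= s l) : nat).
  by apply/sum_boolP; exists j; rewrite ltnSn ej.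
rewrite sum_up_down_crossings => /sum_boolP [l /andP [jl sl]].
by apply: (avoids321P s321 ij jl lt); lia.
Qed.

Lemma nonexc_increasing (i j : 'I_n) : i < j -> s i <= i -> s j <= j -> s i < s j.
Proof.
move=> ij ei ej; rewrite ltnNge; apply/negP => le.
have lt : s j < s i by have := perm_ltn_neq s ij; lia.
have : 0 < \sum_(l : 'I_n) ((i <= l) && (s l < i) : nat).
  by apply/sum_boolP; exists j; lia.
rewrite -sum_up_down_crossings => /sum_boolP [l /andP [li sl]].
by apply: (avoids321P s321 li ij _ lt); have := perm_ltn_neq s li; lia.
Qed.

Lemma fixE : fix_ s = #|ground (exc_pair s)|.
Proof.
apply: eq_card => k; rewrite !inE height_exc_pair -leqNgt.
apply/eqP/andP => [fix_k | [le_sk_k /eqP no_up]].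
  have fk : s k = k :> nat by rewrite fix_k.
  split; first by rewrite fk.
  rewrite eqn0Ngt; apply/negP => /sum_boolP [j /andP [jk ksj]].
  have : 0 < \sum_(l : 'I_n) ((l < k) && (k <= s l) : nat).
    by apply/sum_boolP; exists j; rewrite jk ksj.
  rewrite sum_up_down_crossings => /sum_boolP [l /andP [kl slk]].
  have lk : k < l.
    by rewrite ltn_neqAle kl andbT; apply: contraTneq slk => /val_inj <-; rewrite fk ltnn.
  by apply: (avoids321P s321 jk lk); have := perm_ltn_neq s jk; lia.
apply/val_inj/eqP; rewrite eqn_leq le_sk_k /= leqNgt; apply/negP => lt_sk_k.
have : 0 < \sum_(l : 'I_n) ((k <= l) && (s l < k) : nat).
  by apply/sum_boolP; exists k; rewrite leqnn.
by rewrite -sum_up_down_crossings no_up.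
Qed.

Lemma cros_add_exc : cros s + exc s = area (exc_pair s).
Proof.
rewrite /exc -[#|_|]/#|(exc_pair s).1| -card_exc_val card_sumb /cros -big_split.
apply: eq_bigr => i _; rewrite card_sumb height_exc_pair /= inE.
have [ei | ni] := ltnP i (s i).
  rewrite -(sum_perm_eq_andb s i (fun j => j < i)) -big_split; apply: eq_bigr => j _ /=.
  have incr : j < i -> i < s j -> s j < s i by move=> a b; apply: exc_increasing; lia.
  rewrite inE -val_eqE /=; lia.
(* Adding [s i < i] = [s^-1 i != i] to both sides makes the identity hold termwise in j. *)
have moved_i : (s i < i : nat) = ((s^-1)%g i != i) :> nat.
  by rewrite (can2_eq (permKV s) (permK s)) eq_sym -val_eqE /=; lia.
rewrite sum_up_down_crossings; apply/eqP; rewrite -(eqn_add2r (s i < i)) {2}moved_i.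
rewrite -(sum_perm_eq_andb s i (fun j => j < i)) -(sum_perm_eq_andb s i (fun j => j != i)).
rewrite -(sum_eq_andb i (fun=> s i < i)) -!big_split; apply/eqP/eq_bigr => j _ /=.
have incr : i < j -> s j <= j -> s i < s j by move=> ij; apply: nonexc_increasing.
have [->|] := eqVneq j i; first by rewrite inE /=; lia.
by rewrite inE -!val_eqE /=; lia.
Qed.

End Avoiding321.

(** * A 321-avoiding permutation is determined by its excedance pair *)

Lemma enum_sorted n (A : {pred 'I_n}) : sorted (relpre val ltn) (enum A).
Proof.
rewrite /enum_mem -enumT; apply: sorted_filter; first by move=> ? ? ?; apply: ltn_trans.
by rewrite -sorted_map val_enum_ord iota_ltn_sorted.
Qed.

Lemma count_lt_count n (A : {set 'I_n}) (k : nat) :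
  count_lt A k = count (fun j : 'I_n => j < k) (enum A).
Proof.
rewrite -sum1_count big_enum_cond /count_lt [RHS]big_mkcond /=.
by apply: eq_bigr => j _; case: (_ && _).
Qed.

Lemma index_count n (s : seq 'I_n) (k : 'I_n) :
  sorted (relpre val ltn) s -> k \in s -> index k s = count (fun j : 'I_n => j < k) s.
Proof.
elim: s => //= a s IH sorted_as; rewrite inE.
have a_min : all (relpre val ltn a) s.
  by apply: order_path_min sorted_as => ? ? ?; apply: ltn_trans.
have [->|ne] /= := eqVneq k a => [_|ks].
  rewrite ltnn (eq_in_count (a2 := pred0)) ?count_pred0 // => j /(allP a_min) /= aj.
  by rewrite ltnNge ltnW.
by rewrite IH ?(path_sorted sorted_as) //; have /= -> := allP a_min k ks.
Qed.

Lemma count_lt_index n (A : {set 'I_n}) k : k \in A -> count_lt A k = index k (enum A).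
Proof. by move=> kA; rewrite count_lt_count index_count ?enum_sorted ?mem_enum. Qed.

Lemma nth_enum_mem n (A : {set 'I_n}) x0 i : i < #|A| -> nth x0 (enum A) i \in A.
Proof. by move=> iA; rewrite -mem_enum mem_nth -?cardE. Qed.

Lemma count_lt_nth n (A : {set 'I_n}) x0 i : i < #|A| -> count_lt A (nth x0 (enum A) i) = i.
Proof.
by move=> iA; rewrite count_lt_index ?nth_enum_mem // index_uniq ?enum_uniq -?cardE.
Qed.

Lemma nth_enum_increasing n (A : {set 'I_n}) x0 y0 i j :
  i < j -> j < #|A| -> nth x0 (enum A) i < nth y0 (enum A) j.
Proof.
move=> ij jA; have iA := ltn_trans ij jA.
rewrite (set_nth_default y0 x0) -?cardE //.
have := sorted_ltn_nth (fun _ _ _ => @ltn_trans _ _ _) y0 (enum_sorted A).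
by apply; rewrite ?inE -?cardE.
Qed.

Section BallotPerm.

Variables (n : nat) (p : pairset n).

Definition ballot_perm_fun (k : 'I_n) : 'I_n :=
  if k \in p.1 then nth k (enum p.2) (index k (enum p.1))
  else nth k (enum (~: p.2)) (index k (enum (~: p.1))).

Hypothesis ballot_p : ballot p.

Let card_eq : #|p.1| = #|p.2|.
Proof. by case/andP: ballot_p => /eqP. Qed.

Let cardC_eq : #|~: p.1| = #|~: p.2|.
Proof. by apply/eqP; rewrite -(eqn_add2l #|p.1|) cardsC card_eq cardsC. Qed.

Let count_lt_ballot (k : 'I_n) : count_lt p.2 k.+1 <= count_lt p.1 k.
Proof. by case/andP: ballot_p => _ /forallP. Qed.

Let index_lt (A : {set 'I_n}) k : k \in A -> index k (enum A) < #|A|.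
Proof. by move=> kA; rewrite cardE index_mem mem_enum. Qed.

Lemma ballot_perm_val k : k \in p.1 -> ballot_perm_fun k \in p.2.
Proof. by move=> kA; rewrite /ballot_perm_fun kA nth_enum_mem // -card_eq index_lt. Qed.

Lemma ballot_perm_nonval k : k \notin p.1 -> ballot_perm_fun k \notin p.2.
Proof.
move=> kA; rewrite /ballot_perm_fun (negbTE kA) -in_setC nth_enum_mem //.
by rewrite -cardC_eq index_lt ?inE.
Qed.

Lemma ballot_perm_exc k : k \in p.1 -> k < ballot_perm_fun k.
Proof.
move=> kA; have := ballot_perm_val kA; rewrite /ballot_perm_fun kA => vV.
have := count_lt_ballot (nth k (enum p.2) (index k (enum p.1))).
rewrite count_ltS vV count_lt_nth -?card_eq ?index_lt // -count_lt_index // addn1.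
by rewrite [k < _]ltnNge; apply: contraL => /(count_lt_mono p.1); rewrite -leqNgt.
Qed.

Lemma ballot_perm_nonexc k : k \notin p.1 -> ballot_perm_fun k <= k.
Proof.
move=> kA; have kA' : k \in ~: p.1 by rewrite inE.
rewrite /ballot_perm_fun (negbTE kA); set w := nth k _ _.
have cw : count_lt (~: p.2) w = count_lt (~: p.1) k.
  by rewrite count_lt_nth ?count_lt_index // -cardC_eq index_lt.
rewrite leqNgt; apply/negP => kw.
have := count_lt_mono (~: p.2) kw; have := count_ltS (~: p.1) k; rewrite kA'.
have := count_ltC p.1 k.+1; have := count_ltC p.2 k.+1.
have := count_lt_ballot k; have := count_ltS p.1 k; lia.
Qed.

Lemma ballot_perm_increasing (k l : 'I_n) :
  k < l -> (k \in p.1) = (l \in p.1) -> ballot_perm_fun k < ballot_perm_fun l.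
Proof.
move=> kl; rewrite /ballot_perm_fun; case: (boolP (k \in p.1)) => kA /esym lA; rewrite lA.
  apply: nth_enum_increasing; last by rewrite -card_eq index_lt.
  rewrite -!count_lt_index //; have := count_ltS p.1 k; rewrite kA.
  by have := count_lt_mono p.1 kl; lia.
have [kA' lA'] : k \in ~: p.1 /\ l \in ~: p.1 by rewrite !inE kA lA.
apply: nth_enum_increasing; last by rewrite -cardC_eq index_lt.
rewrite -!count_lt_index //; have := count_ltS (~: p.1) k; rewrite kA'.
by have := count_lt_mono (~: p.1) kl; lia.
Qed.

Lemma ballot_perm_inj : injective ballot_perm_fun.
Proof.
suff neq (k l : 'I_n) : k < l -> ballot_perm_fun k != ballot_perm_fun l.
  move=> k l E; case: (ltngtP k l) => [kl|lk|/val_inj //].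
    by move: (neq _ _ kl); rewrite E eqxx.
  by move: (neq _ _ lk); rewrite E eqxx.
move=> kl; have [e|] := eqVneq (k \in p.1) (l \in p.1).
  by rewrite -val_eqE neq_ltn (ballot_perm_increasing kl e).
case: (boolP (k \in p.1)) => kA; case: (boolP (l \in p.1)) => lA //= _.
  by apply: contraTneq (ballot_perm_nonval lA) => <-; rewrite negbK ballot_perm_val.
by apply: contraTneq (ballot_perm_val lA) => <-; rewrite ballot_perm_nonval.
Qed.

Definition ballot_perm : 'S_n := perm ballot_perm_inj.

Lemma ballot_perm_avoids321 : avoids321 ballot_perm.
Proof.
apply/forallP => i; apply/forallP => j; apply/forallP => k; rewrite !permE.
apply/negP => /and4P [ij jk ji kj].
have [e|ne] := eqVneq (i \in p.1) (j \in p.1).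
  by have := ballot_perm_increasing ij e; rewrite ltnNge (ltnW ji).
have [e|ne2] := eqVneq (j \in p.1) (k \in p.1).
  by have := ballot_perm_increasing jk e; rewrite ltnNge (ltnW kj).
have e : (i \in p.1) = (k \in p.1).
  by move: ne ne2; case: (i \in p.1); case: (j \in p.1); case: (k \in p.1).
have := ballot_perm_increasing (ltn_trans ij jk) e.
by rewrite ltnNge (ltnW (ltn_trans kj ji)).
Qed.

Lemma exc_pair_ballot_perm : exc_pair ballot_perm = p.
Proof.
have exc1 : (exc_pair ballot_perm).1 = p.1.
  apply/setP => x; rewrite !inE permE.
  case: (boolP (x \in p.1)) => xA; first by rewrite ballot_perm_exc.
  by rewrite ltnNge ballot_perm_nonexc.
apply: injective_projections => //=; apply/setP => x.
rewrite inE -{2 3}(permKV ballot_perm x); set y := (ballot_perm^-1)%g x.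
move/setP/(_ y): exc1; rewrite inE => ->; rewrite permE.
case: (boolP (y \in p.1)) => h; first by rewrite ballot_perm_val.
by apply/esym/negbTE/ballot_perm_nonval.
Qed.

End BallotPerm.

Lemma map_enum_increasing n (f : 'I_n -> 'I_n) (A : {set 'I_n}) :
  {in A &, {homo f : i j / i < j}} -> map f (enum A) = enum (f @: A).
Proof.
move=> f_incr.
apply: (irr_sorted_eq (fun _ _ _ => @ltn_trans _ _ _) (fun i => ltnn (val i))).
- apply: (homo_sorted_in (P := mem A)); last exact: enum_sorted.
    exact: f_incr.
  by apply/allP => i; rewrite mem_enum.
- exact: enum_sorted.
move=> y; rewrite mem_enum; apply/mapP/imsetP => -[x xA ->]; exists x => //.
  by rewrite -mem_enum.
by rewrite mem_enum.
Qed.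

Section Avoiding321Determined.

Variables (n : nat) (s : 'S_n).
Hypothesis s321 : avoids321 s.

Lemma exc_val_imset : (exc_pair s).2 = s @: (exc_pair s).1.
Proof.
by apply/setP => x; rewrite -{2}(permKV s x) mem_imset ?inE ?permKV //; apply: perm_inj.
Qed.

Lemma nonexc_val_imset : ~: (exc_pair s).2 = s @: ~: (exc_pair s).1.
Proof.
by apply/setP => x; rewrite -{2}(permKV s x) mem_imset ?inE ?permKV //; apply: perm_inj.
Qed.

Lemma ballot_perm_exc_pair : ballot_perm_fun (exc_pair s) =1 s.
Proof.
move=> k; rewrite /ballot_perm_fun.
case: (boolP (k \in _)) => kA.
  rewrite exc_val_imset -map_enum_increasing ?(nth_map k) ?nth_index ?mem_enum //.
    by rewrite index_mem mem_enum.
  by move=> i j; rewrite !inE => ei ej ij; apply: exc_increasing.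
have kA' : k \in ~: (exc_pair s).1 by rewrite inE.
rewrite nonexc_val_imset -map_enum_increasing ?(nth_map k) ?nth_index ?mem_enum //.
  by rewrite index_mem mem_enum.
by move=> i j; rewrite !inE -!leqNgt => ei ej ij; apply: nonexc_increasing.
Qed.

End Avoiding321Determined.

Lemma exc_pair_inj n : {in @avoids321 n &, injective (@exc_pair n)}.
Proof.
move=> s t s321 t321 E; apply/permP => k.
by rewrite -(ballot_perm_exc_pair s321 k) -(ballot_perm_exc_pair t321 k) E.
Qed.

Lemma sum_avoids321_ballot n (R : nmodType) (G : pairset n -> R) :
  (\sum_(s : 'S_n | avoids321 s) G (exc_pair s) = \sum_(p | ballot p) G p)%R.
Proof.
have im_exc : [set p | ballot p] = @exc_pair n @: [set s : 'S_n | avoids321 s].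
  apply/setP => p; rewrite inE; apply/idP/imsetP => [bp | [s]].
    by exists (ballot_perm bp); rewrite ?inE ?ballot_perm_avoids321 ?exc_pair_ballot_perm.
  by rewrite inE => _ ->; apply: ballot_exc_pair.
rewrite (eq_bigl (fun p => p \in [set p | ballot p])); last by move=> p; rewrite inE.
rewrite im_exc big_imset => [|s t]; last by rewrite !inE; apply: exc_pair_inj.
by apply: eq_bigl => s; rewrite inE.
Qed.

(** * Trading cyclic valleys for cyclic double ascents *)

(* For p = exc_pair s, k is in cvalleys p iff s k < k < s^-1 k, and k is in
   p.1 :&: p.2 iff s^-1 k < k < s k. *)
Definition cvalleys n (p : pairset n) : {set 'I_n} :=
  [set k | [&& k \notin p.1, k \notin p.2 & 0 < height p k]].

Definition add_cdas n (pX : pairset n * {set 'I_n}) : pairset n :=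
  (pX.1.1 :|: pX.2, pX.1.2 :|: pX.2).

Definition split_cdas n (p : pairset n) : pairset n * {set 'I_n} :=
  ((p.1 :\: p.2, p.2 :\: p.1), p.1 :&: p.2).

Definition add_cdas_dom n (pX : pairset n * {set 'I_n}) : bool :=
  [&& ballot pX.1, pX.1.1 :&: pX.1.2 == set0 & pX.2 \subset cvalleys pX.1].

Lemma count_ltU n (A X : {set 'I_n}) k :
  A :&: X = set0 -> count_lt (A :|: X) k = count_lt A k + count_lt X k.
Proof.
move=> /setP AX0; rewrite /count_lt -big_split; apply: eq_bigr => j _ /=.
by have := AX0 j; rewrite !inE; case: (j \in A); case: (j \in X); case: (j < k).
Qed.

Lemma count_ltID n (A B : {set 'I_n}) k :
  count_lt A k = count_lt (A :\: B) k + count_lt (A :&: B) k.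
Proof.
rewrite /count_lt -big_split; apply: eq_bigr => j _ /=; rewrite !inE.
by case: (j \in A); case: (j \in B); case: (j < k).
Qed.

Lemma split_cdasK n : cancel (@split_cdas n) (@add_cdas n).
Proof.
case=> A V; congr (_, _); apply/setP => x; rewrite !inE.
  by case: (x \in A); case: (x \in V).
by case: (x \in A); case: (x \in V).
Qed.

Lemma add_cdas_dom_disjoint n (p : pairset n) X : add_cdas_dom (p, X) ->
  [/\ p.1 :&: X = set0, p.2 :&: X = set0 & p.1 :&: p.2 = set0].
Proof.
case/and3P => /= _ /eqP p0 /subsetP Xv; split => //; apply/setP => x; rewrite !inE.
  by case: (boolP (x \in X)) => [/Xv|]; rewrite ?inE ?andbF // => /and3P [/negbTE ->].
by case: (boolP (x \in X)) => [/Xv|]; rewrite ?inE ?andbF // => /and3P [_ /negbTE ->].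
Qed.

Lemma height_add_cdas n (p : pairset n) X k :
  add_cdas_dom (p, X) -> height (add_cdas (p, X)) k = height p k.
Proof. by case/add_cdas_dom_disjoint => D1 D2 _; rewrite /height /= !count_ltU //; lia. Qed.

Lemma split_cdas_dom n (p : pairset n) : ballot p -> add_cdas_dom (split_cdas p).
Proof.
case: p => A V /andP [/eqP cardAV /forallP AV]; rewrite /add_cdas_dom /split_cdas /=.
have IC : V :&: A = A :&: V by rewrite setIC.
have cA := count_ltID A V; have cV := count_ltID V A; rewrite IC in cV.
apply/and3P; split.
- apply/andP; split => /=.
    have := cardsID V A; have := cardsID A V; rewrite IC cardAV => <-.
    by move/eqP; rewrite eqn_add2l.
  apply/forallP => k /=; have := AV k; rewrite cA cV.
  by have := count_ltS (A :&: V) k; have := count_ltS (V :\: A) k; lia.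
- by apply/eqP/setP => x; rewrite !inE; case: (x \in A); case: (x \in V).
- apply/subsetP => k; rewrite !inE => /andP [kA kV]; rewrite kA kV /=.
  have := cV k; have := count_ltS V k; rewrite kV; have := cA k; have := AV k.
  by rewrite /height /=; lia.
Qed.

Lemma ballot_add_cdasK n (pX : pairset n * {set 'I_n}) :
  add_cdas_dom pX -> ballot (add_cdas pX) && (split_cdas (add_cdas pX) == pX).
Proof.
case: pX => [[A V] X] dom; have [/= AX VX AV] := add_cdas_dom_disjoint dom.
case/and3P: dom => /= /andP [/eqP cardAV /forallP ballotAV] _ /subsetP Xv.
apply/andP; split.
- apply/andP; split; first by rewrite /add_cdas /= !cardsU AX VX !cards0 cardAV.
  apply/forallP => k; rewrite /add_cdas /= !count_ltU //.
  have := ballotAV k; have := count_ltS V k; have := count_ltS X k.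
  case: (boolP (k \in X)) => [kX|_] /=; last by lia.
  move: (Xv k kX); rewrite inE /= => /and3P [_ /negbTE -> hp].
  by move: hp; rewrite /height /=; lia.
- apply/eqP; congr (_, _); [congr (_, _)|]; apply/setP => x; rewrite !inE;
  move/setP/(_ x): AX; move/setP/(_ x): VX; move/setP/(_ x): AV; rewrite !inE;
  by case: (x \in A); case: (x \in V); case: (x \in X).
Qed.

Lemma sum_ballot_split n (R : nmodType) (G : pairset n -> R) :
  (\sum_(p | ballot p) G p =
   \sum_(p | ballot p && (p.1 :&: p.2 == set0))
      \sum_(X : {set 'I_n} | X \subset cvalleys p) G (add_cdas (p, X)))%R.
Proof.
rewrite pair_big_dep /= (reindex_onto (@add_cdas n) (@split_cdas n)) /=; last first.
  by move=> p _; apply: split_cdasK.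
apply: eq_big => [[p X]|[p X] _ //].
apply/idP/idP => [/andP [bp /eqP <-]|dom].
  by have := split_cdas_dom bp; rewrite /add_cdas_dom andbA.
by apply: ballot_add_cdasK; rewrite /add_cdas_dom andbA.
Qed.

Lemma ground_add_cdas n (p : pairset n) X :
  add_cdas_dom (p, X) -> ground (add_cdas (p, X)) = ground p.
Proof.
move=> dom; apply/setP => x; rewrite !inE height_add_cdas //=.
case/and3P: dom => _ _ /subsetP Xv; case: (boolP (x \in X)) => [xX|]; rewrite ?orbF ?orbT //=.
by move: (Xv x xX); rewrite inE /= => /and3P [_ _]; rewrite lt0n => /negbTE ->; rewrite andbF.
Qed.

Lemma area_add_cdas n (p : pairset n) X :
  add_cdas_dom (p, X) -> area (add_cdas (p, X)) = area p.
Proof. by move=> dom; apply: eq_bigr => k _; rewrite height_add_cdas. Qed.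

Lemma card_add_cdas_exc n (p : pairset n) X :
  add_cdas_dom (p, X) -> #|(add_cdas (p, X)).1| = #|p.1| + #|X|.
Proof. by case/add_cdas_dom_disjoint => AX _ _; rewrite /= cardsU AX cards0 subn0. Qed.

Lemma card_add_cdas_cpk n (p : pairset n) X :
  add_cdas_dom (p, X) ->
  #|(add_cdas (p, X)).2 :\: (add_cdas (p, X)).1| = #|p.2 :\: p.1|.
Proof.
case/add_cdas_dom_disjoint => /setP AX /setP VX /setP AV; apply: eq_card => x /=.
move: (AX x) (VX x) (AV x); rewrite !inE.
by case: (x \in p.1); case: (x \in p.2); case: (x \in X).
Qed.

Lemma card_partition n (p : pairset n) : ballot p -> p.1 :&: p.2 == set0 ->
  n = #|p.1| + #|p.2| + #|cvalleys p| + #|ground p|.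
Proof.
case: p => A V /andP [_ /forallP ballotAV] /eqP /setP /= AV.
rewrite -[n in LHS]card_ord !card_sumb -!big_split; apply: eq_bigr => k _ /=.
have := AV k; rewrite !inE /=.
case: (boolP (k \in A)) => kA; case: (boolP (k \in V)) => kV //= _.
  have := ballotAV k; have := count_ltS V k; rewrite kV.
  by rewrite /height /= => ? ?; have -> : count_lt A k - count_lt V k == 0 = false by lia.
by rewrite lt0n; case: eqP.
Qed.

(** * Generating functions *)

Local Open Scope ring_scope.

Lemma sum_subset_expr (R : comNzRingType) (I : finType) (L : {set I}) (c : R) :
  \sum_(X : {set I} | X \subset L) c ^+ #|X| = (1 + c) ^+ #|L|.
Proof.
rewrite -prodr_const [RHS]big_mkcond /=.
rewrite (eq_bigr (fun i => (if i \in L then c else 0) + 1)) => [|i _]; last first.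
  by case: (i \in L); rewrite ?add0r // addrC.
rewrite (@bigA_distr R 0 1 *%R +%R) [LHS]big_mkcond /=; apply: eq_big => // X _.
case: (boolP (X \subset L)) => [XL | /subsetPn [i iX iL]].
  rewrite -prodr_const [LHS]big_mkcond /=; apply: eq_bigr => i _.
  by case: (boolP (i \in X)) => // /(subsetP XL) ->.
by rewrite (bigD1 i) //= iX (negbTE iL) mul0r.
Qed.

Definition ballot_weight (R : comNzRingType) n (q a b d : R) (p : pairset n) : R :=
  q ^+ area p * a ^+ #|p.2 :\: p.1| * b ^+ #|p.1| * d ^+ #|ground p|.

Lemma P3_P4 (R : comNzRingType) n (a b c : R) : P3 n a b c = P4 n a 1 b c.
Proof. by apply: eq_bigr => s _; rewrite expr1n mulr1. Qed.

Lemma P4_ballotE (R : comNzRingType) n (q a b d : R) :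
  P4 n q a (q * b) d = \sum_(p : pairset n | ballot p) ballot_weight q a b d p.
Proof.
rewrite -sum_avoids321_ballot; apply: eq_bigr => s s321.
rewrite /ballot_weight -(cros_add_exc s321) -(fixE s321) -cpkE.
by rewrite -[#|(exc_pair s).1|]/(exc s) exprD exprMn; ring.
Qed.

Lemma sum_ballot_weight (R : comNzRingType) n (q a b d : R) :
  \sum_(p : pairset n | ballot p) ballot_weight q a b d p =
  \sum_(p : pairset n | ballot p && (p.1 :&: p.2 == set0))
     ballot_weight q a b d p * (1 + b) ^+ #|cvalleys p|.
Proof.
rewrite sum_ballot_split; apply: eq_bigr => p /andP [bp dp].
rewrite -sum_subset_expr big_distrr /=; apply: eq_bigr => X Xv.
have dom : add_cdas_dom (p, X) by rewrite /add_cdas_dom bp dp.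
rewrite /ballot_weight area_add_cdas // ground_add_cdas // card_add_cdas_exc //.
by rewrite card_add_cdas_cpk // exprD; ring.
Qed.

Lemma P4_rescale (R : comNzRingType) n (q l a b d a' b' d' : R) :
  l ^+ 2 * a * b = a' * b' -> l * d = d' -> l * (1 + b) = 1 + b' ->
  l ^+ n * P4 n q a (q * b) d = P4 n q a' (q * b') d'.
Proof.
move=> Eab Ed Eb; rewrite !P4_ballotE !sum_ballot_weight big_distrr /=.
apply: eq_bigr => p /andP [bp dp].
have [cardAV _] := andP bp; rewrite /ballot_weight.
have /setDidPl -> : [disjoint p.2 & p.1] by rewrite -setI_eq0 setIC.
rewrite {1}(card_partition bp dp) -(eqP cardAV).
transitivity (q ^+ area p * (l ^+ 2 * a * b) ^+ #|p.1| * (l * d) ^+ #|ground p| *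
              (l * (1 + b)) ^+ #|cvalleys p|).
  by rewrite !exprD !exprMn; ring.
by rewrite Eab Ed Eb exprMn; ring.
Qed.

Lemma inverse_substitution (R : fieldType) (t x D u v : R) :
  2%:R != 0 :> R -> t != 0 -> x != 0 -> x != 1 ->
  D ^+ 2 = (1 + t) ^+ 2 - 4%:R * x * t ->
  u = (1 + t ^+ 2 - 2%:R * x * t - (1 - t) * D) / (2%:R * (1 - x) * t) ->
  v = ((1 + t) ^+ 2 - 2%:R * x * t - (1 + t) * D) / (2%:R * x * t) ->
  (1 + u) * (1 + v) = (1 + t) * (1 + u * v) /\ (1 + u) ^+ 2 * v = x * t * (1 + u * v) ^+ 2.
Proof.
move=> h2 ht hx hx1 HD Eu0 Ev0.
have h1x : 1 - x != 0 by rewrite subr_eq0 eq_sym.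
have Ea : (D - (1 - t)) * (D + (1 - t)) = 2%:R * (2%:R * (1 - x) * t).
  by transitivity (D ^+ 2 - (1 - t) ^+ 2); [ring | rewrite HD; ring].
have Eb : (1 + t - D) * (1 + t + D) = 2%:R * (2%:R * x * t).
  by transitivity ((1 + t) ^+ 2 - D ^+ 2); [ring | rewrite HD; ring].
have /andP [ha hb] : (D - (1 - t) != 0) && (D + (1 - t) != 0).
  by rewrite -negb_or -mulf_eq0 Ea !mulf_neq0.
have /andP [hc hd] : (1 + t - D != 0) && (1 + t + D != 0).
  by rewrite -negb_or -mulf_eq0 Eb !mulf_neq0.
have Eu : u = (D - (1 - t)) / (D + (1 - t)).
  rewrite Eu0; transitivity ((D ^+ 2 + (1 - t) ^+ 2 - 2%:R * (1 - t) * D) /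
     ((D - (1 - t)) * (D + (1 - t)))); first by rewrite Ea HD; field; rewrite h2 h1x ht.
  by field; rewrite ha hb.
have Ev : v = (1 + t - D) / (1 + t + D).
  rewrite Ev0; transitivity (((1 + t) ^+ 2 + D ^+ 2 - 2%:R * (1 + t) * D) /
     ((1 + t - D) * (1 + t + D))); first by rewrite Eb HD; field; rewrite h2 hx ht.
  by field; rewrite hc hd.
split; first by rewrite Eu Ev; field; rewrite hb hd.
have h4 : 4%:R != 0 :> R by rewrite -[4%N]/(2 * 2)%N natrM mulf_neq0.
have Ext : x * t = (1 + t - D) * (1 + t + D) / 4%:R by rewrite Eb; field.
by rewrite Eu Ev Ext; field; rewrite hb hd.
Qed.

Theorem corollary3p11 :
  (forall (R : fieldType) (n : nat) (q t x r : R),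
     (1 <= n)%N -> 1 + x != 0 -> x + t != 0 -> 1 + x * t != 0 ->
     P3 n q (t * q) r =
       ((1 + x * t) / (1 + x)) ^+ n *
       P4 n q ((1 + x) ^+ 2 * t / ((x + t) * (1 + x * t)))
            (q * (x + t) / (1 + x * t)) ((1 + x) * r / (1 + x * t)))
  /\
  (forall (R : rcfType) (n : nat) (q t x r : R),
     (1 <= n)%N -> t != 0 -> x != 0 -> x != 1 ->
     0 <= (1 + t) ^+ 2 - 4%:R * x * t ->
     let D := Num.sqrt ((1 + t) ^+ 2 - 4%:R * x * t) in
     let u := (1 + t ^+ 2 - 2%:R * x * t - (1 - t) * D) / (2%:R * (1 - x) * t) in
     let v := ((1 + t) ^+ 2 - 2%:R * x * t - (1 + t) * D) / (2%:R * x * t) in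
     1 + u != 0 -> 1 + u * v != 0 ->
     P4 n q x (q * t) r =
       ((1 + u) / (1 + u * v)) ^+ n * P3 n q (q * v) ((1 + u * v) * r / (1 + u))).
Proof.
split=> [R n q t x r _ h1x hxt h1xt | R n q t x r _ ht hx hx1 hdisc D u v hu huv].
  rewrite P3_P4 [t * q]mulrC -[q * (x + t) / _]mulrA; symmetry.
  by apply: P4_rescale; field; rewrite ?h1x ?hxt ?h1xt.
have h2 : 2%:R != 0 :> R by rewrite pnatr_eq0.
have [Euv Exu] := inverse_substitution h2 ht hx hx1 (sqr_sqrtr hdisc) (erefl u) (erefl v).
rewrite P3_P4; symmetry; apply: P4_rescale.
- by apply: (mulIf (expf_neq0 2 huv)); rewrite -Exu; field.
- by field; rewrite hu huv.
- by apply: (mulIf huv); rewrite -Euv; field.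
Qed.
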